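(* Let $k\geq0$ and let $w,\bar w\in W_n$ both be increasing up to $k$ and have the same $k$-truncated A-code, with $\ell(w)=\ell(\bar w)+1$. Suppose that $v(\bar w)=s_iv(w)$ for some simple reflection $s_i$, $i\geq0$. Then $\bar w=s_iw$.
   Context: $W_n$ is the group of signed permutations $w=(w_1,\ldots,w_n)$ of $\{1,\ldots,n\}$; $\ell(w)=\#\{i<j\mid w_i>w_j\}+\sum_{w_i<0}|w_i|$. Left multiplication: for $i\geq1$, $s_iw$ is obtained by interchanging the values $i$ and $i+1$ (and $-i$ and $-(i+1)$) in $w$; $s_0w$ changes the sign of the entry equal to $\pm1$. $w$ is increasing up to $k$ if $0<w_1<\cdots<w_k$ (vacuous for $k=0$). The A-code is $\gamma_i:=\#\{j>i\mid w_j<w_i\}$ and the $k$-truncated A-code is $(\gamma_{k+1},\ldots,\gamma_n)$. $v(w)$ is the element obtained from $w$ by rearranging the entries $w_{k+1},\ldots,w_n$ in increasing order. *)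

From mathcomp Require Import all_boot all_order all_algebra.
Set Implicit Arguments. Unset Strict Implicit. Unset Printing Implicit Defensive.
Import Order.TTheory GRing.Theory Num.Theory.
Local Open Scope ring_scope.

(* A signed permutation w = (w_1,...,w_n) of W_n is represented by the
   sequence [:: w_1; ...; w_n] of integers (0-indexed in Rocq). *)
Definition signed_perm (n : nat) (w : seq int) : bool :=
  (size w == n) && perm_eq (map absz w) (iota 1 n).

Definition slength (w : seq int) : nat :=
  (\sum_(0 <= i < size w) \sum_(i.+1 <= j < size w) ((nth 0%R w j < nth 0%R w i)%R : nat))%N
  + (\sum_(0 <= i < size w) (if (nth 0%R w i < 0)%R then absz (nth 0%R w i) else 0%N))%N.

(* Left multiplication by the simple reflection s_i:
   s_0 changes the sign of the entry equal to +-1; for i >= 1, s_i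
   interchanges the values i and i+1 (and -i and -(i+1)). *)
Definition sref (i : nat) (w : seq int) : seq int :=
  map (fun x : int =>
    if i == 0%N then (if absz x == 1%N then - x else x)
    else if absz x == i then (if x < 0 then - (i.+1)%:Z else (i.+1)%:Z)
    else if absz x == i.+1 then (if x < 0 then - i%:Z else i%:Z)
    else x) w.

Definition incr_upto (k : nat) (w : seq int) : bool :=
  all (fun x : int => 0 < x) (take k w) && sorted (fun x y : int => x < y) (take k w).

Definition Acode_entry (w : seq int) (i : nat) : nat :=
  (\sum_(i.+1 <= j < size w) ((nth 0%R w j < nth 0%R w i)%R : nat))%N.

Definition trunc_Acode (k : nat) (w : seq int) : seq nat :=
  map (Acode_entry w) (iota k (size w - k)).

Definition vrearr (k : nat) (w : seq int) : seq int :=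
  take k w ++ sort (fun x y : int => x <= y) (drop k w).

From mathcomp Require Import all_boot all_order all_algebra zify.

Set Implicit Arguments.
Unset Strict Implicit.
Unset Printing Implicit Defensive.
Import Order.TTheory GRing.Theory Num.Theory.
Local Open Scope ring_scope.

(* Since v(w) and v(wb) = s_i v(w) both have increasing tails, s_i cannot
   exchange two tail entries of w, so it preserves their relative order.
   Hence s_i w has the same truncated A-code as w, i.e. as wb.  Tails of wb
   and of s_i w are also rearrangements of each other, and a sequence is
   determined by its multiset of entries together with its A-code; the
   first k entries agree directly because v leaves them untouched. *)

Section SortedMap.

Variables (disp : Order.disp_t) (T : orderType disp) (f : T -> T).

Lemma sorted_map_mono (s : seq T) :
  {in s &, forall x y, x < y -> f x < f y \/ f x = y /\ f y = x}%O ->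
  sorted <=%O s -> sorted <=%O (map f s) ->
  {in s &, {mono f : x y / (x < y)%O}}.
Proof.
elim: s => [|x s IHs] f_lt //= /[dup] /(order_path_min le_trans) le_x_s xs_sorted.
move=> /[dup] /(order_path_min le_trans); rewrite all_map => le_fx_fs fxs_sorted.
have in_xs z : z \in s -> z \in x :: s by rewrite inE => ->; rewrite orbT.
have mono_x y : y \in s -> (f x < f y)%O = (x < y)%O /\ (f y < f x)%O = (y < x)%O.
  move=> ys; have := allP le_x_s y ys; rewrite le_eqVlt => /predU1P[<-|lt_xy].
    by rewrite ltxx.
  have [lt_fxy|[fxy fyx]] := f_lt x y (mem_head _ _) (in_xs y ys) lt_xy.
    by rewrite lt_fxy lt_xy (lt_gtF lt_fxy) (lt_gtF lt_xy).
  by move: (allP le_fx_fs y ys) => /=; rewrite fxy fyx leNgt lt_xy.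
move=> a b; rewrite !inE => /predU1P[->|as_] /predU1P[->|bs].
- by rewrite !ltxx.
- by case: (mono_x b bs).
- by case: (mono_x a as_).
apply: IHs => //; [move=> y z ys zs; apply: f_lt; exact: in_xs|
  exact: path_sorted xs_sorted|exact: path_sorted fxs_sorted].
Qed.

End SortedMap.

Definition sref_val (i : nat) (x : int) : int :=
  if i == 0%N then (if absz x == 1%N then - x else x)
  else if absz x == i then (if x < 0 then - (i.+1)%:Z else (i.+1)%:Z)
  else if absz x == i.+1 then (if x < 0 then - i%:Z else i%:Z)
  else x.

Lemma srefE i w : sref i w = map (sref_val i) w. Proof. by []. Qed.

Lemma sref_val_lt i x y : x != 0 -> y != 0 -> x < y ->
  sref_val i x < sref_val i y \/ sref_val i x = y /\ sref_val i y = x.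
Proof. by rewrite /sref_val => *; repeat case: ifP => ?; lia. Qed.

Lemma sref_val_mono_sorted i d : {in d, forall x, x != 0} ->
  sorted <=%O (map (sref_val i) (sort <=%O d)) ->
  {in d &, {mono sref_val i : x y / x < y}}.
Proof.
move=> d_neq0 sorted_map x y xd yd.
have sref_lt : {in sort <=%O d &, forall x y, x < y ->
    sref_val i x < sref_val i y \/ sref_val i x = y /\ sref_val i y = x}.
  by move=> a b /[!mem_sort] ad bd; apply: sref_val_lt; apply: d_neq0.
by apply: (sorted_map_mono sref_lt (sort_sorted le_total d) sorted_map); rewrite mem_sort.
Qed.

Lemma signed_perm_neq0 n w x : signed_perm n w -> x \in w -> x != 0.
Proof.
case/andP=> _ /perm_mem w_abs xw; apply: contraTneq (map_f absz xw) => ->.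
by rewrite w_abs mem_iota.
Qed.

Definition Acode (s : seq int) : seq nat := map (Acode_entry s) (iota 0 (size s)).

Lemma Acode_entry0 x s : Acode_entry (x :: s) 0 = count (fun y => y < x) s.
Proof.
by rewrite /Acode_entry big_add1 /= -sum1_count [RHS]big_mkcond [RHS](big_nth 0).
Qed.

Lemma Acode_entryS x s m : Acode_entry (x :: s) m.+1 = Acode_entry s m.
Proof. by rewrite /Acode_entry big_add1. Qed.

Lemma Acode_cons x s : Acode (x :: s) = count (fun y => y < x) s :: Acode s.
Proof.
rewrite /Acode /= Acode_entry0 -(addn0 1%N) iotaDl -map_comp.
by congr cons; apply: eq_map => m /=; rewrite add1n Acode_entryS.
Qed.

Lemma Acode_entry_drop k s m : Acode_entry s (k + m) = Acode_entry (drop k s) m.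
Proof.
elim: k s => [|k IHk] [|x s]; rewrite ?drop0 //=.
  by rewrite /Acode_entry /index_iota /= !big_nil.
by rewrite Acode_entryS IHk.
Qed.

Lemma trunc_AcodeE k s : trunc_Acode k s = Acode (drop k s).
Proof.
rewrite /trunc_Acode /Acode size_drop -{1}(addn0 k) iotaDl -map_comp.
by apply: eq_map => m /=; rewrite Acode_entry_drop.
Qed.

Lemma Acode_map (f : int -> int) s :
  {in s &, {mono f : x y / x < y}} -> Acode (map f s) = Acode s.
Proof.
elim: s => [|x s IHs] //= f_mono.
have in_xs y : y \in s -> y \in x :: s by rewrite inE => ->; rewrite orbT.
rewrite !Acode_cons IHs; last by move=> a b /in_xs as_ /in_xs bs; apply: f_mono.
by rewrite count_map; congr cons; apply: eq_in_count => y /in_xs ys /=; rewrite f_mono ?mem_head.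
Qed.

(* Comparing the counts of entries below x and below y in the common
   multiset shows that equal first A-code entries force x = y. *)
Lemma perm_Acode_inj s t : perm_eq s t -> Acode s = Acode t -> s = t.
Proof.
elim: s t => [|x s IHs] [|y t] //; try by move/perm_size.
rewrite !Acode_cons => pst [count_xy /IHs st].
suff exy : x = y by move: pst; rewrite exy perm_cons => /st ->.
have count_lt_mono (a b : int) (u : seq int) : a < b ->
    (count (fun z => (z < a)%R) u <= count (fun z => (z < b)%R) u)%N.
  by move=> lt_ab; apply: sub_count => z /= /lt_trans; apply.
have := permP pst (fun z => z < x); have := permP pst (fun z => z < y).
rewrite /= !ltxx; case: ltgtP => //= lt_xy; rewrite !add0n ?add1n.
- move=> count_y _; have := count_lt_mono _ _ s lt_xy.
  by rewrite count_xy -count_y ltnn.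
- move=> _ count_x; have := count_lt_mono _ _ t lt_xy.
  by rewrite -count_xy count_x ltnn.
Qed.

Lemma vrearr_sref_split k i w wb :
  size wb = size w ->
  vrearr k wb = sref i (vrearr k w) ->
  take k wb = take k (sref i w) /\
  sort <=%O (drop k wb) = map (sref_val i) (sort <=%O (drop k w)).
Proof.
move=> size_eq; rewrite /vrearr srefE map_cat map_take => /eqP.
by rewrite eqseq_cat ?size_take ?size_map ?size_eq // => /andP[/eqP -> /eqP ->].
Qed.

Theorem lemma10 (n k : nat) (w wb : seq int) (i : nat) :
  signed_perm n w -> signed_perm n wb ->
  incr_upto k w -> incr_upto k wb ->
  trunc_Acode k w = trunc_Acode k wb ->
  slength w = (slength wb).+1 ->
  (i < n)%N ->
  vrearr k wb = sref i (vrearr k w) ->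
  wb = sref i w.
Proof.
move=> sp_w sp_wb _ _ code_eq _ _.
have size_eq : size wb = size w by case/andP: sp_w => /eqP ->; case/andP: sp_wb => /eqP.
case/(vrearr_sref_split size_eq) => head_eq tail_eq.
set d := drop k w.
have sref_mono : {in d &, {mono sref_val i : x y / x < y}}.
  apply: sref_val_mono_sorted => [x /mem_drop|]; first exact: signed_perm_neq0 sp_w.
  by rewrite -tail_eq; apply: sort_sorted; exact: le_total.
have tail_perm : perm_eq (drop k wb) (drop k (sref i w)).
  rewrite srefE -map_drop -/d -(perm_sort <=%O) tail_eq perm_map //.
  by rewrite perm_sort.
have tails : drop k wb = drop k (sref i w).
  apply: perm_Acode_inj tail_perm _.
  by rewrite srefE -map_drop -/d Acode_map // -trunc_AcodeE -code_eq trunc_AcodeE.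
by rewrite -(cat_take_drop k wb) head_eq tails cat_take_drop.
Qed.
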